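(* Let $f$ be a planar discrete curve and $c\in\mathcal{P}^\pm$ a circle congruence along $f$ lying in a linear complex $\overline{\mathfrak{m}}$, i.e. $\langle\mathfrak{c}_i,\overline{\mathfrak{m}}\rangle=0$ for all $i$. Then the M-inversions $\sigma_{r_{ij}}$ in $$\mathfrak{r}_{ij}:=\mathfrak{c}_i\langle\mathfrak{c}_j,\mathfrak{p}\rangle-\mathfrak{c}_j\langle\mathfrak{c}_i,\mathfrak{p}\rangle$$ form an $(\overline{\mathfrak{m}})$-type Darboux evolution map for $f$ if and only if there exists a tangential circle congruence $t:\mathcal{E}\to\mathbb{P}(\mathcal{L})$, i.e. circles $t_{ij}$ with $\mathfrak{t}_{ij}\perp\mathfrak{f}_i,\mathfrak{f}_j,\mathfrak{c}_i,\mathfrak{c}_j$ for every edge $(ij)$.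
   Context: Planar light cone model: $\mathbb{R}^{3,2}$ with form of signature $(3,2)$, light cone $\mathcal{L}$; fixed $\mathfrak{p}$ with $\langle\mathfrak{p},\mathfrak{p}\rangle=-1$; $v$ with $\langle\mathfrak{v},\mathfrak{p}\rangle=0$ are points of $\mathbb{R}^2\cup\{\infty\}$, others oriented circles/lines; oriented contact = orthogonality. Inversion in $\mathfrak{a}$: $\sigma_a(x)=x-\frac{2\langle x,\mathfrak{a}\rangle}{\langle\mathfrak{a},\mathfrak{a}\rangle}\mathfrak{a}$; M-inversion if $\mathfrak{a}\perp\mathfrak{p}$. A discrete curve $f:\mathcal{V}\to\mathbb{P}(\mathcal{L})$ maps consecutive integers to points; $\mathcal{E}$ its edges. $\mathcal{P}^\pm_i:=\{\mathfrak{f}_{i-1},\mathfrak{f}_{i+1}\}^\perp\cap\mathcal{L}$ (circles through $f_{i-1},f_{i+1}$); a circle congruence $c\in\mathcal{P}^\pm$ chooses $c_i$ in this pencil at each vertex. An evolution map of $f$ assigns to each edge $(ij)$ an M-inversion $\sigma_{ij}$ with $\sigma_{ij}(f_i)=f_j$; it is of $(\mathfrak{m})$-type if all elements of the 2-dimensional space $\mathrm{span}\{\mathfrak{m},\mathfrak{p}\}$ are fixed by all $\sigma_{ij}$. It is an $(\mathfrak{m})$-type Darboux evolution map if moreover it evolves a circle congruence $c\in\mathcal{P}^\pm$: $\sigma_{ij}(\mathfrak{c}_i)=\mathfrak{c}_j$ for representatives with $\langle\mathfrak{c}_i,\mathfrak{p}\rangle=\langle\mathfrak{c}_j,\mathfrak{p}\rangle=-1$.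 *)

From HB Require Import structures.
From mathcomp Require Import all_boot all_order all_algebra.
Set Implicit Arguments. Unset Strict Implicit. Unset Printing Implicit Defensive.
Import Order.TTheory GRing.Theory Num.Theory.
Local Open Scope ring_scope.

Section Defs.
Variable R : realFieldType.
Notation vec := 'rV[R]_5.

Definition ip (x y : vec) : R :=
  \sum_(k < 5) (if (k < 3)%N then 1 else -1) * x 0 k * y 0 k.

(* x represents a point of P(L): nonzero null vector *)
Definition null_rep (x : vec) : Prop := x != 0 /\ ip x x = 0.

Definition peq (x y : vec) : Prop := exists lam : R, lam != 0 /\ y = lam *: x.

Definition inversion (a x : vec) : vec := x - ((2 * ip x a) / ip a a) *: a.

(* sigma_a is an M-inversion (w.r.t. the point-sphere complex p) *)
Definition is_M_inversion (p a : vec) : Prop := ip a p = 0 /\ ip a a != 0.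

(* planar discrete curve on Z: f i represents a point of R^2 ∪ {oo} *)
Definition planar_curve (p : vec) (f : int -> vec) : Prop :=
  forall i : int, null_rep (f i) /\ ip (f i) p = 0.

(* circle congruence c in P^± along f (c_i a circle, <c_i,p> <> 0) *)
Definition circle_congruence (p : vec) (f c : int -> vec) : Prop :=
  forall i : int, null_rep (c i) /\ ip (c i) p != 0 /\
    ip (c i) (f (i - 1)) = 0 /\ ip (c i) (f (i + 1)) = 0.

Definition normalize (p c : vec) : vec := (- ip c p)^-1 *: c.

(* evolution map: edge (i,i+1) |-> sigma_{a i} *)
Definition evolution_map (p : vec) (f a : int -> vec) : Prop :=
  forall i : int, is_M_inversion p (a i) /\ peq (f (i + 1)) (inversion (a i) (f i)).

Definition m_type_evolution_map (p m : vec) (f a : int -> vec) : Prop :=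
  evolution_map p f a /\
  forall (i : int) (al be : R),
    inversion (a i) (al *: m + be *: p) = al *: m + be *: p.

Definition m_type_darboux_evolution_map (p m : vec) (f c a : int -> vec) : Prop :=
  m_type_evolution_map p m f a /\
  forall i : int, inversion (a i) (normalize p (c i)) = normalize p (c (i + 1)).

Definition r_edge (p : vec) (c : int -> vec) (i : int) : vec :=
  ip (c (i + 1)) p *: c i - ip (c i) p *: c (i + 1).

(* tangential circle congruence t : E -> P(L), t i for the edge (i,i+1) *)
Definition tangential_congruence (f c t : int -> vec) : Prop :=
  forall i : int, null_rep (t i) /\
    ip (t i) (f i) = 0 /\ ip (t i) (f (i + 1)) = 0 /\
    ip (t i) (c i) = 0 /\ ip (t i) (c (i + 1)) = 0.

End Defs.

(* Write r for the vector r_edge p c i of an edge.  Since r is orthogonal to p and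
   to everything orthogonal to both c_i and c_(i+1), and since the inversion in r
   exchanges the normalised null vectors c_i and c_(i+1) (it is the reflection in
   their difference), the (mbar)-type and Darboux conditions hold automatically.
   What remains is to show that sigma_r(f_i) ~ f_(i+1) exactly when the edge has a
   tangential circle.  If sigma_r(f_i) ~ f_(i+1), then
   f_i - (<f_i,c_i>/<c_i,c_(i+1)>) c_(i+1) is such a circle.  Conversely, the
   form has Witt index 2, so three pairwise orthogonal null vectors are linearly
   dependent.  A tangential circle t therefore gives f_i in span{t, c_(i+1)} and
   f_(i+1) in span{t, c_i}.  Now sigma_r fixes t and maps c_(i+1) into the line of
   c_i, so sigma_r(f_i) and f_(i+1) both lie in span{t, c_i} and are orthogonal
   to p.  That intersection is a single line. *)

From HB Require Import structures.
From mathcomp Require Import all_boot all_order all_algebra.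
From mathcomp Require Import ring.
Import Order.TTheory GRing.Theory Num.Theory.
Local Open Scope ring_scope.
Set Implicit Arguments. Unset Strict Implicit. Unset Printing Implicit Defensive.

Section Form.
Variable R : realFieldType.
Notation vec := 'rV[R]_5.
Implicit Types (x y z : vec) (k : R).

Lemma ipC x y : ip x y = ip y x.
Proof. by apply: eq_bigr => k _; rewrite mulrAC. Qed.

Lemma ipDl x y z : ip (x + y) z = ip x z + ip y z.
Proof. by rewrite /ip -big_split; apply: eq_bigr => k _; rewrite !mxE mulrDr mulrDl. Qed.

Lemma ipZl k x y : ip (k *: x) y = k * ip x y.
Proof. by rewrite /ip mulr_sumr; apply: eq_bigr => j _; rewrite !mxE mulrCA !mulrA. Qed.

Lemma ip0l y : ip 0 y = 0.
Proof. by rewrite -(scale0r 0) ipZl mul0r. Qed.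

Lemma ipNl x y : ip (- x) y = - ip x y.
Proof. by rewrite -scaleN1r ipZl mulN1r. Qed.

Lemma ipBl x y z : ip (x - y) z = ip x z - ip y z.
Proof. by rewrite ipDl ipNl. Qed.

Lemma ipZr k x y : ip x (k *: y) = k * ip x y.
Proof. by rewrite ipC ipZl ipC. Qed.

Lemma ipNr x y : ip x (- y) = - ip x y.
Proof. by rewrite !(ipC x) ipNl. Qed.

Lemma ipBr x y z : ip x (y - z) = ip x y - ip x z.
Proof. by rewrite !(ipC x) ipBl. Qed.

Lemma ip_suml n (a : 'I_n -> R) (u : 'I_n -> vec) y :
  ip (\sum_i a i *: u i) y = \sum_i a i * ip (u i) y.
Proof.
rewrite (big_morph (fun u : vec => ip u y) (fun u w => ipDl u w y) (ip0l y)).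
by apply: eq_bigr => i _; rewrite ipZl.
Qed.

Lemma ip_split x y : ip x y =
  \sum_(i < 3) x 0 (lshift 2 i) * y 0 (lshift 2 i)
  - \sum_(j < 2) x 0 (rshift 3 j) * y 0 (rshift 3 j).
Proof.
rewrite /ip (@big_split_ord _ _ _ 3 2) /= -sumrN; congr (_ + _); apply: eq_bigr => i _.
  by rewrite ltn_ord mul1r.
by rewrite mulN1r mulNr.
Qed.

Lemma null_timelike0_eq0 z :
  ip z z = 0 -> (forall j : 'I_2, z 0 (rshift 3 j) = 0) -> z = 0.
Proof.
move=> zz0 zt0.
have zt2 : \sum_(j < 2) z 0 (rshift 3 j) * z 0 (rshift 3 j) = 0.
  by rewrite big1 // => j _; rewrite zt0 mul0r.
move: zz0; rewrite ip_split zt2 subr0 => /eqP.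
rewrite psumr_eq0 => [/allP zs0|i _]; last exact: sqr_ge0.
apply/rowP => k; rewrite mxE; case: (@split_ordP 3 2 k) => [i|j] ->; last exact: zt0.
by move: (zs0 i (mem_index_enum i)); rewrite /= mulf_eq0 orbb => /eqP.
Qed.

Lemma null_orth_not_free (X : seq vec) :
  (2 < size X)%N -> {in X &, forall x y, ip x y = 0} -> ~~ free X.
Proof.
move=> X_gt2 X_orth; apply/negP => /(freeP (X := in_tuple X)) X_free.
pose T : 'M[R]_(size X, 2) := \matrix_(i, j) X`_i 0 (rshift 3 j).
have : kermx T != 0.
  by rewrite -mxrank_eq0 mxrank_ker subn_eq0 -ltnNge (leq_ltn_trans (rank_leq_col T)).
case/rowV0Pn => v /sub_kermxP vT0 /eqP; apply; apply/rowP => i.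
rewrite mxE X_free // => {i}; apply: null_timelike0_eq0 => [|j].
  rewrite ip_suml big1 // => i _; rewrite ipC ip_suml big1 ?mulr0 // => k _.
  by rewrite X_orth ?mulr0 // mem_nth.
have := congr1 (fun M : 'M_(1, 2) => M 0 j) vT0; rewrite !mxE => vTj.
by rewrite summxE -[RHS]vTj; apply: eq_bigr => i _; rewrite !mxE.
Qed.

Lemma null_orth_span t x u w :
  t != 0 -> ip t t = 0 -> ip x x = 0 -> ip u u = 0 ->
  ip t x = 0 -> ip t u = 0 -> ip x u = 0 -> ip t w = 0 -> ip u w != 0 ->
  exists a b, x = a *: t + b *: u.
Proof.
move=> t_neq0 tt xx uu tx tu xu tw uw.
have tu_free : free [:: t; u].
  rewrite free_cons seq1_free span_seq1; apply/andP; split.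
    apply: contra t_neq0 => /vlineP[k tE]; move: tw; rewrite tE ipZl => /eqP.
    by rewrite mulf_eq0 (negPf uw) orbF => /eqP->; rewrite scale0r.
  by apply: contraNneq uw => ->; rewrite ip0l.
have : ~~ free [:: x; t; u].
  apply: null_orth_not_free => // y z; rewrite !inE.
  by move=> /or3P[]/eqP-> /or3P[]/eqP->; rewrite // ipC.
rewrite free_cons tu_free andbT negbK span_cons span_seq1.
by case/memv_addP => _ /vlineP[a ->] [_ /vlineP[b ->] ->]; exists a, b.
Qed.

Lemma span_orthpE p t u x a b : ip u p != 0 -> ip x p = 0 ->
  x = a *: t + b *: u -> x = a *: (t - (ip t p / ip u p) *: u).
Proof.
move=> up xp xE; move: xp; rewrite xE ipDl !ipZl => /eqP; rewrite addr_eq0 => /eqP bE.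
have -> : b = - (a * ip t p) / ip u p by rewrite bE opprK mulfK.
by rewrite scalerBr scalerA mulNr scaleNr mulrA.
Qed.

End Form.

Section Inversion.
Variable R : realFieldType.
Notation vec := 'rV[R]_5.
Implicit Types (a x y u v : vec) (k : R).

Fact inversion_is_linear a : linear (inversion a).
Proof.
move=> k x y; apply/rowP => i; rewrite /inversion ipDl ipZl !mxE; ring.
Qed.
HB.instance Definition _ a :=
  GRing.isLinear.Build R vec vec *:%R (inversion a) (inversion_is_linear a).

Lemma inversion_id a x : ip x a = 0 -> inversion a x = x.
Proof. by move=> xa; rewrite /inversion xa mulr0 mul0r scale0r subr0. Qed.

Lemma ip_inversionr a x y : ip x a = 0 -> ip x (inversion a y) = ip x y.
Proof. by move=> xa; rewrite /inversion ipBr ipZr xa mulr0 subr0. Qed.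

Lemma inversionZ k a x : k != 0 -> inversion (k *: a) x = inversion a x.
Proof.
move=> k_neq0; rewrite /inversion ipZr ipZl ipZr scalerA; congr (_ - _ *: _).
rewrite !invfM; transitivity (2 * ip x a / ip a a * (k / k) * (k / k)); first ring.
by rewrite divff // !mulr1.
Qed.

Lemma inversion_swap u v :
  ip u u = ip v v -> ip (u - v) (u - v) != 0 -> inversion (u - v) u = v.
Proof.
move=> uv d_neq0; have dE : ip (u - v) (u - v) = 2 * ip u (u - v).
  by rewrite !(ipBl, ipBr) -uv (ipC v u); ring.
by rewrite /inversion -dE divff // scale1r subKr.
Qed.

End Inversion.

Section PencilReflection.
Variable R : realFieldType.
Notation vec := 'rV[R]_5.

Definition rvec (p c0 c1 : vec) : vec := ip c1 p *: c0 - ip c0 p *: c1.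

Lemma ip_rvecp (p c0 c1 : vec) : ip (rvec p c0 c1) p = 0.
Proof. by rewrite ipBl !ipZl mulrC subrr. Qed.

Lemma ip_rvec_orth (p c0 c1 x : vec) :
  ip x c0 = 0 -> ip x c1 = 0 -> ip x (rvec p c0 c1) = 0.
Proof. by move=> xc0 xc1; rewrite ipBr !ipZr xc0 xc1 !mulr0 subrr. Qed.

Lemma ip_rvec_self (p c0 c1 : vec) : ip c0 c0 = 0 -> ip c1 c1 = 0 ->
  ip (rvec p c0 c1) (rvec p c0 c1) = - 2 * ip c0 p * ip c1 p * ip c0 c1.
Proof.
by move=> c00 c11; rewrite !(ipBl, ipBr, ipZl, ipZr) c00 c11 (ipC c1 c0); ring.
Qed.

Lemma normalizeK (p c : vec) : ip c p != 0 -> (- ip c p) *: normalize p c = c.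
Proof. by move=> cp; rewrite scalerA divff ?scale1r ?oppr_eq0. Qed.

Lemma normalize_null (p c : vec) :
  ip c c = 0 -> ip (normalize p c) (normalize p c) = 0.
Proof. by move=> cc; rewrite ipZl ipZr cc !mulr0. Qed.

Lemma rvec_normalize (p c0 c1 : vec) : ip c0 p != 0 -> ip c1 p != 0 ->
  rvec p c0 c1 = (ip c0 p * ip c1 p) *: (normalize p c1 - normalize p c0).
Proof.
move=> c0p c1p; apply/rowP => i; rewrite !mxE; field.
by rewrite c0p c1p.
Qed.

End PencilReflection.

Section Edge.
Variable R : realFieldType.
Notation vec := 'rV[R]_5.

Definition tangent_to (f0 f1 c0 c1 t : vec) : Prop :=
  null_rep t /\ ip t f0 = 0 /\ ip t f1 = 0 /\ ip t c0 = 0 /\ ip t c1 = 0.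

(* Among the circles touching c1 at the point f0 (the pencil spanned by f0 and c1),
   the one that also touches c0. *)
Definition tangent_circle (f0 c0 c1 : vec) : vec :=
  f0 - (ip f0 c0 / ip c0 c1) *: c1.

Variables (p f0 f1 c0 c1 : vec).
Hypotheses (f0_neq0 : f0 != 0) (f00 : ip f0 f0 = 0) (f0p : ip f0 p = 0).
Hypotheses (f1_neq0 : f1 != 0) (f11 : ip f1 f1 = 0) (f1p : ip f1 p = 0).
Hypotheses (c00 : ip c0 c0 = 0) (c0p : ip c0 p != 0) (c0f1 : ip c0 f1 = 0).
Hypotheses (c11 : ip c1 c1 = 0) (c1p : ip c1 p != 0) (c1f0 : ip c1 f0 = 0).
Hypothesis r_nondeg : ip (rvec p c0 c1) (rvec p c0 c1) != 0.
Local Notation r := (rvec p c0 c1).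

Lemma ip_c0c1_neq0 : ip c0 c1 != 0.
Proof. by apply: contraNneq r_nondeg => c01; rewrite ip_rvec_self // c01 mulr0. Qed.

Lemma normalize_diff_nondeg :
  ip (normalize p c1 - normalize p c0) (normalize p c1 - normalize p c0) != 0.
Proof.
apply: contraNneq r_nondeg => d0.
by rewrite rvec_normalize // ipZl ipZr d0 !mulr0.
Qed.

Lemma inversion_rvec_normalize0 : inversion r (normalize p c0) = normalize p c1.
Proof.
rewrite rvec_normalize // -opprB scalerN -scaleNr inversionZ ?oppr_eq0 ?mulf_neq0 //.
by rewrite inversion_swap ?normalize_null // -opprB ipNl ipNr opprK normalize_diff_nondeg.
Qed.

Lemma inversion_rvec_normalize1 : inversion r (normalize p c1) = normalize p c0.
Proof.
rewrite rvec_normalize // inversionZ ?mulf_neq0 //.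
by rewrite inversion_swap ?normalize_null ?normalize_diff_nondeg.
Qed.

Lemma inversion_rvec_c1 : inversion r c1 = (ip c1 p / ip c0 p) *: c0.
Proof.
rewrite -[X in inversion _ X](normalizeK c1p) linearZ /= inversion_rvec_normalize1.
by rewrite /normalize scalerA invrN mulrN mulNr opprK.
Qed.

Lemma tangent_circle_tangent :
  peq f1 (inversion r f0) -> tangent_to f0 f1 c0 c1 (tangent_circle f0 c0 c1).
Proof.
case=> lam [lam_neq0 f0E]; rewrite /tangent_circle; set y := _ / _; set t := _ - _.
have tc0 : ip t c0 = 0.
  by rewrite ipBl ipZl (ipC c1) divfK ?subrr ?ip_c0c1_neq0.
have tc1 : ip t c1 = 0 by rewrite ipBl ipZl c11 mulr0 ipC c1f0 subrr.
have tf0 : ip t f0 = 0 by rewrite ipBl ipZl f00 c1f0 mulr0 subrr.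
have tt : ip t t = 0 by rewrite ipBr ipZr tf0 tc1 mulr0 subrr.
have tf1 : ip t f1 = 0.
  apply: (mulfI lam_neq0); rewrite mulr0 -ipZr -f0E ip_inversionr //.
  exact: ip_rvec_orth.
have t_neq0 : t != 0.
  apply: contraNneq f0_neq0 => /eqP; rewrite subr_eq0 => /eqP f0E'.
  move: f0p; rewrite f0E' ipZl => /eqP; rewrite mulf_eq0 (negPf c1p) orbF.
  by move=> /eqP->; rewrite scale0r.
by do !split.
Qed.

Lemma peq_of_tangent t : tangent_to f0 f1 c0 c1 t -> peq f1 (inversion r f0).
Proof.
case=> [[t_neq0 tt] [tf0 [tf1 [tc0 tc1]]]].
have c1c0 : ip c1 c0 != 0 by rewrite ipC ip_c0c1_neq0.
have f0c1 : ip f0 c1 = 0 by rewrite ipC.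
have f1c0 : ip f1 c0 = 0 by rewrite ipC.
have [mu [y f0E]] := null_orth_span t_neq0 tt f00 c11 tf0 tc1 f0c1 tc0 c1c0.
have [mu' [z f1E]] := null_orth_span t_neq0 tt f11 c00 tf1 tc0 f1c0 tc1 ip_c0c1_neq0.
set s := t - (ip t p / ip c0 p) *: c0.
have f1s : f1 = mu' *: s := span_orthpE c0p f1p f1E.
have f0s : inversion r f0 = mu *: s.
  apply: (span_orthpE (b := y * (ip c1 p / ip c0 p))) c0p _ _.
    by rewrite ipC ip_inversionr ?(ipC p) ?ip_rvecp.
  rewrite f0E linearD !linearZ /= inversion_id ?ip_rvec_orth //.
  by rewrite inversion_rvec_c1 scalerA.
have mu'_neq0 : mu' != 0.
  by apply: contraNneq f1_neq0 => mu'0; rewrite f1s mu'0 scale0r.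
have mu_neq0 : mu != 0.
  by apply: contraNneq f0_neq0 => mu0; rewrite (span_orthpE c1p f0p f0E) mu0 scale0r.
exists (mu / mu'); split; first by rewrite mulf_neq0 ?invr_eq0.
by rewrite f0s f1s scalerA divfK.
Qed.

End Edge.

Theorem lemma3p7 (R : realFieldType) (p mbar : 'rV[R]_5)
    (f c : int -> 'rV[R]_5) :
  ip p p = -1 ->
  planar_curve p f ->
  circle_congruence p f c ->
  mbar != 0 ->
  (forall i : int, ip (c i) mbar = 0) ->
  (forall i : int, ip (r_edge p c i) (r_edge p c i) != 0) ->
  (m_type_darboux_evolution_map p mbar f c (r_edge p c) <->
   exists t : int -> 'rV[R]_5, tangential_congruence f c t).
Proof.
move=> _ f_planar c_cong _ c_mbar r_nondeg.
have edge i :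
    (peq (f (i + 1)) (inversion (r_edge p c i) (f i)) ->
     tangent_to (f i) (f (i + 1)) (c i) (c (i + 1))
       (tangent_circle (f i) (c i) (c (i + 1))))
    /\ ((exists t, tangent_to (f i) (f (i + 1)) (c i) (c (i + 1)) t) ->
        peq (f (i + 1)) (inversion (r_edge p c i) (f i))).
  have [[f0_neq0 f00] f0p] := f_planar i.
  have [[f1_neq0 f11] f1p] := f_planar (i + 1).
  have [[_ c00] [c0p [_ c0f1]]] := c_cong i.
  have [[_ c11] [c1p [c1f0 _]]] := c_cong (i + 1); rewrite addrK in c1f0.
  have r_i := r_nondeg i.
  by split; [apply: tangent_circle_tangent | case=> t; apply: peq_of_tangent].
split.
  case=> [[f_evol _] _]; exists (fun i => tangent_circle (f i) (c i) (c (i + 1))) => i.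
  exact: (proj1 (edge i)) (proj2 (f_evol i)).
case=> t t_tangent; split; [split|] => i.
- split; last exact: (proj2 (edge i)) (ex_intro _ _ (t_tangent i)).
  by split; [exact: ip_rvecp | exact: r_nondeg].
- move=> al be; apply: inversion_id.
  by rewrite ipDl !ipZl (ipC p) ip_rvecp ip_rvec_orth ?(ipC mbar) // !mulr0 addr0.
- have [[_ c00] [c0p _]] := c_cong i; have [[_ c11] [c1p _]] := c_cong (i + 1).
  by have r_i := r_nondeg i; apply: inversion_rvec_normalize0.
Qed.
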